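(* Let $\Lambda$ be an integral lattice of signature $(2,b)$ with $b\ge3$ and $\tilde{\mathrm{O}}^+(\Lambda)$ the kernel of $\mathrm{O}^+(\Lambda)\to\mathrm{O}(\Lambda^\vee/\Lambda)$. Then for every $k$, $M_k(\tilde{\mathrm{O}}^+(\Lambda),\det)^{(1)}=M_k(\tilde{\mathrm{O}}^+(\Lambda),\det)$, i.e. every modular form of weight $k$ and character $\det$ for $\tilde{\mathrm{O}}^+(\Lambda)$ vanishes along every irreducible component of the $(-2)$-Heegner divisor.
   Context: $\mathcal{D}$ is one of the two connected components of $\{[\omega]\in\mathbb{P}(\Lambda\otimes\mathbb{C}):(\omega,\omega)=0,(\omega,\bar\omega)>0\}$ and $\mathrm{O}^+(\Lambda)$ the subgroup of $\mathrm{O}(\Lambda)$ preserving $\mathcal{D}$. $\lambda=\mathcal{O}(-1)|_{\mathcal{D}}$. $M_k(\Gamma,\chi)$ is the space of $\Gamma$-invariant holomorphic sections of $\lambda^{\otimes k}\otimes\chi$ on $\mathcal{D}$. The $(-2)$-Heegner divisor is $\mathcal{H}=\bigcup_{\delta\in\Lambda,(\delta,\delta)=-2}\delta^\perp\cap\mathcal{D}$, and $M_k(\Gamma,\chi)^{(m)}$ is the subspace of forms vanishing to order $\ge m$ along every irreducible component of $\mathcal{H}$. *)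

From HB Require Import structures.
From mathcomp Require Import all_boot all_order all_algebra.
From mathcomp Require Import reals complex.
Set Implicit Arguments.
Unset Strict Implicit.
Unset Printing Implicit Defensive.
Import Order.TTheory GRing.Theory Num.Theory.
Local Open Scope ring_scope.

(* Lattice Lambda = Z^n with (integral) Gram matrix G : 'M[int]_n. *)

Definition intmx (F : nzRingType) (n m : nat) (A : 'M[int]_(n, m)) : 'M[F]_(n, m) :=
  map_mx (fun z : int => z%:~R) A.

Definition has_signature (R : realType) (p q : nat) (G : 'M[int]_(p + q)) : Prop :=
  exists P : 'M[R]_(p + q), P \in unitmx /\
    P^T *m intmx R G *m P = diag_mx (\row_(i < p + q) (if (i < p)%N then 1 else -1)).

Arguments has_signature R p q G : clear implicits.

Definition bilC (R : realType) (n : nat) (G : 'M[int]_n) (w v : 'cV[R[i]]_n) : R[i] :=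
  (w^T *m intmx R[i] G *m v) 0 0.

Definition conjv (R : realType) (n : nat) (w : 'cV[R[i]]_n) : 'cV[R[i]]_n :=
  map_mx (fun z : R[i] => z^*) w.

(* affine cone over {[w] : (w,w)=0, (w,wbar)>0} *)
Definition Omega (R : realType) (n : nat) (G : 'M[int]_n) (w : 'cV[R[i]]_n) : Prop :=
  w != 0 /\ bilC G w w = 0 /\ 0 < bilC G w (conjv w).

Definition openC (R : realType) (n : nat) (U : 'cV[R[i]]_n -> Prop) : Prop :=
  forall z, U z -> exists e : R[i], 0 < e /\
    forall w : 'cV[R[i]]_n, (forall j, `|w j 0 - z j 0| < e) -> U w.

Definition connectedC (R : realType) (n : nat) (S : 'cV[R[i]]_n -> Prop) : Prop :=
  forall A B : 'cV[R[i]]_n -> Prop, openC A -> openC B ->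
    (forall z, S z -> A z \/ B z) ->
    (forall z, S z -> A z -> B z -> False) ->
    (forall z, S z -> A z) \/ (forall z, S z -> B z).

Definition conn_component (R : realType) (n : nat) (X D : 'cV[R[i]]_n -> Prop) : Prop :=
  [/\ forall z, D z -> X z, exists z, D z, connectedC D &
      forall S, (forall z, S z -> X z) -> connectedC S -> (exists z, S z /\ D z) ->
        forall z, S z -> D z].

(* holomorphic on an open set U of C^n: continuous and holomorphic in each
   variable separately (equivalent to joint holomorphy by Osgood's lemma) *)
Definition holomorphic_on (R : realType) (n : nat) (U : 'cV[R[i]]_n -> Prop)
    (H : 'cV[R[i]]_n -> R[i]) : Prop :=
  (forall z, U z -> forall eps : R[i], 0 < eps -> exists del : R[i], 0 < del /\
     forall w, U w -> (forall j, `|w j 0 - z j 0| < del) -> `|H w - H z| < eps) /\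
  (forall z, U z -> forall j : 'I_n, exists l : R[i],
     forall eps : R[i], 0 < eps -> exists del : R[i], 0 < del /\
       forall h : R[i], 0 < `|h| < del ->
         `|(H (z + h *: delta_mx j 0) - H z) / h - l| < eps).

Definition holomorphic_on_sub (R : realType) (n : nat) (D : 'cV[R[i]]_n -> Prop)
    (F : 'cV[R[i]]_n -> R[i]) : Prop :=
  forall z, D z -> exists (U : 'cV[R[i]]_n -> Prop) (H : 'cV[R[i]]_n -> R[i]),
    [/\ openC U, U z, holomorphic_on U H & forall w, U w -> D w -> F w = H w].

Definition orthO (n : nat) (G g : 'M[int]_n) : Prop :=
  g \in unitmx /\ g^T *m G *m g = G.

(* g acts trivially on Lambda^vee / Lambda, Lambda^vee = {v in Q^n | G v in Z^n} *)
Definition acts_trivially_on_discr (n : nat) (G g : 'M[int]_n) : Prop :=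
  forall v : 'cV[rat]_n, (forall i, (intmx rat G *m v) i 0 \is a Num.int) ->
    forall i, (intmx rat g *m v - v) i 0 \is a Num.int.

Definition Oplus (R : realType) (n : nat) (G : 'M[int]_n) (D : 'cV[R[i]]_n -> Prop)
    (g : 'M[int]_n) : Prop :=
  orthO G g /\ forall w, D w <-> D (intmx R[i] g *m w).

Definition Otilde_plus (R : realType) (n : nat) (G : 'M[int]_n) (D : 'cV[R[i]]_n -> Prop)
    (g : 'M[int]_n) : Prop :=
  Oplus G D g /\ acts_trivially_on_discr G g.

Definition detchar (R : realType) (n : nat) (g : 'M[int]_n) : R[i] := (\det g)%:~R.

(* M_k(Gamma, chi): holomorphic functions on the cone D^bullet, homogeneous of
   degree -k (= holomorphic sections of lambda^k) with F(g w) = chi(g) F(w). *)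
Definition modular_form (R : realType) (n : nat) (D : 'cV[R[i]]_n -> Prop)
    (Gamma : 'M[int]_n -> Prop) (chi : 'M[int]_n -> R[i]) (k : int)
    (F : 'cV[R[i]]_n -> R[i]) : Prop :=
  [/\ holomorphic_on_sub D F,
      forall (t : R[i]) w, t != 0 -> D w -> F (t *: w) = t ^ (- k) * F w &
      forall g w, Gamma g -> D w -> F (intmx R[i] g *m w) = chi g * F w].

Definition vanishes_on_Heegner (R : realType) (n : nat) (G : 'M[int]_n)
    (D : 'cV[R[i]]_n -> Prop) (F : 'cV[R[i]]_n -> R[i]) : Prop :=
  forall delta : 'cV[int]_n, (delta^T *m G *m delta) 0 0 = - 2 ->
    forall w, D w -> bilC G (intmx R[i] delta) w = 0 -> F w = 0.

Definition modular_form1 (R : realType) (n : nat) (G : 'M[int]_n) (D : 'cV[R[i]]_n -> Prop)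
    (Gamma : 'M[int]_n -> Prop) (chi : 'M[int]_n -> R[i]) (k : int)
    (F : 'cV[R[i]]_n -> R[i]) : Prop :=
  modular_form D Gamma chi k F /\ vanishes_on_Heegner G D F.

From mathcomp Require Import all_boot all_order all_algebra.
From mathcomp Require Import reals complex ring.
Set Implicit Arguments.
Unset Strict Implicit.
Unset Printing Implicit Defensive.
Import Order.TTheory GRing.Theory Num.Theory.
Local Open Scope ring_scope.

(** The reflection [s x = x + (delta, x) delta] in a (-2)-vector [delta] is
   an integral isometry of determinant [-1]; it acts trivially on the
   discriminant group because [(delta, v)] is an integer for every [v] in the
   dual lattice, and it fixes the Heegner component [delta^perp] pointwise.
   Being an involutive linear homeomorphism of the cone [Omega] that maps a
   point of [D] (any point of [delta^perp cap D]) into [D], it preserves the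
   connected component [D], so [s] lies in [Otilde_plus].  For [w] on
   [delta^perp cap D] the modularity of [F] under [s] then reads
   [F w = F (s w) = - F w], whence [F w = 0]. *)

Lemma det_add1mx_rank1 (R : comNzRingType) (n : nat) (u : 'cV[R]_n) (v : 'rV[R]_n) :
  \det (1%:M + u *m v) = 1 + (v *m u) 0 0.
Proof.
pose L : 'M[R]_(1 + n) := block_mx 1%:M v 0 1%:M.
pose L' : 'M[R]_(1 + n) := block_mx 1%:M (- v) 0 1%:M.
pose M : 'M[R]_(1 + n) := block_mx 1%:M 0 u (1%:M + u *m v).
have LML' : L *m M *m L' = block_mx (1%:M + v *m u) 0 u 1%:M.
  rewrite /L /M /L' !mulmx_block !mul1mx !mulmx1 !mul0mx !mulmx0 !addr0 !add0r.
  have -> : (1%:M + v *m u) *m - v + v *m (1%:M + u *m v) = 0.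
    by rewrite mulmxN mulmxDl mul1mx mulmxDr mulmx1 mulmxA addNr.
  by rewrite mulmxN addrCA addNr addr0.
move/(congr1 determinant): LML'.
rewrite !det_mulmx /L /M /L' !det_ublock !det_lblock !det1 !mul1r !mulr1 => ->.
by rewrite det_mx11 !mxE.
Qed.

Section Reflection.
Variables (R : comNzRingType) (n : nat) (G : 'M[R]_n) (d : 'cV[R]_n).

Definition reflmx : 'M[R]_n := 1%:M + d *m (d^T *m G).

Lemma reflmx_fix (w : 'cV[R]_n) : d^T *m G *m w = 0 -> reflmx *m w = w.
Proof. by move=> dw; rewrite mulmxDl mul1mx -mulmxA dw mulmx0 addr0. Qed.

Hypothesis dGd : (d^T *m G *m d) 0 0 = -2.

Lemma reflmx_det : \det reflmx = -1.
Proof. by rewrite det_add1mx_rank1 dGd; ring. Qed.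

Lemma reflmx_invol : reflmx *m reflmx = 1%:M.
Proof.
have dGd_scalar : d^T *m G *m d = (-2)%:M by rewrite [LHS]mx11_scalar dGd.
rewrite /reflmx; set P := d *m (d^T *m G).
have sqP : P *m P = (-2) *: P.
  by rewrite -mulmxA (mulmxA (d^T *m G)) dGd_scalar mul_scalar_mx -scalemxAr.
have P_sqP : P + P *m P = - P.
  by rewrite sqP -{1}[P]scale1r -scalerDl -scaleN1r; congr (_ *: _); ring.
by rewrite mulmxDl mul1mx mulmxDr mulmx1 P_sqP addrK.
Qed.

Hypothesis G_sym : G^T = G.

Lemma reflmx_orth : reflmx^T *m G *m reflmx = G.
Proof.
have adjoint : reflmx^T *m G = G *m reflmx.
  rewrite linearD /= trmx1 !trmx_mul G_sym trmxK mulmxDl mul1mx mulmxDr mulmx1.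
  by rewrite !mulmxA.
by rewrite adjoint -mulmxA reflmx_invol mulmx1.
Qed.

End Reflection.

Lemma intmxM (F : nzRingType) (m p q : nat) (A : 'M[int]_(m, p)) (B : 'M[int]_(p, q)) :
  intmx F (A *m B) = intmx F A *m intmx F B.
Proof. exact: map_mxM. Qed.

Lemma intmx1 (F : nzRingType) (n : nat) : intmx F (1%:M : 'M[int]_n) = 1%:M.
Proof. exact: map_mx1. Qed.

Lemma intmx_reflmx (F : comNzRingType) (n : nat) (G : 'M[int]_n) (d : 'cV[int]_n) :
  intmx F (reflmx G d) = reflmx (intmx F G) (intmx F d).
Proof. by rewrite /reflmx /intmx map_mxD map_mx1 !map_mxM map_trmx. Qed.

Lemma reflmx_acts_trivially_on_discr (n : nat) (G : 'M[int]_n) (d : 'cV[int]_n) :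
  acts_trivially_on_discr G (reflmx G d).
Proof.
move=> v Gv i.
rewrite intmx_reflmx /reflmx mulmxDl mul1mx addrAC subrr add0r -!mulmxA mxE.
apply: rpred_sum => j _; apply: rpredM; first by rewrite mxE intr_int.
rewrite mxE; apply: rpred_sum => l _.
by apply: rpredM; [rewrite !mxE intr_int | exact: Gv].
Qed.

Section ComplexCone.
Variables (R : realType) (n : nat).
Local Notation C := R[i].

Lemma openC_preimage_mulmx (M : 'M[C]_n) (A : 'cV[C]_n -> Prop) :
  openC A -> openC (fun z => A (M *m z)).
Proof.
move=> oA z Az; have [e [e_gt0 He]] := oA _ Az.
pose S : C := \sum_j \sum_k `|M j k|.
have S_ge0 : 0 <= S by apply: sumr_ge0 => j _; apply: sumr_ge0.
have S1_gt0 : 0 < 1 + S by rewrite addrC ltr_wpDl.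
have del_gt0 : 0 < e / (1 + S) by rewrite divr_gt0.
exists (e / (1 + S)); split => // w Hw; apply: He => j.
have -> : (M *m w) j 0 - (M *m z) j 0 = (M *m (w - z)) j 0 by rewrite mulmxBr !mxE.
rewrite mxE.
have row_le : \sum_k `|M j k| <= S.
  rewrite /S [X in _ <= X](bigD1 j) //= lerDl.
  by apply: sumr_ge0 => l _; apply: sumr_ge0.
apply: (le_lt_trans (ler_norm_sum _ _ _)).
apply: (@le_lt_trans _ _ (S * (e / (1 + S)))).
  apply: (le_trans _ (ler_wpM2r (ltW del_gt0) row_le)).
  rewrite mulr_suml; apply: ler_sum => k _; rewrite normrM.
  by apply: ler_wpM2l => //; rewrite !mxE ltW ?Hw.
rewrite -[X in _ < X](divfK (lt0r_neq0 S1_gt0)) mulrC ltr_pM2l //.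
by rewrite ltrDr ltr01.
Qed.

Lemma bilC_orthO (G g : 'M[int]_n) (x y : 'cV[C]_n) : orthO G g ->
  bilC G (intmx C g *m x) (intmx C g *m y) = bilC G x y.
Proof.
case=> _ gGg.
have gGg_C : (intmx C g)^T *m intmx C G *m intmx C g = intmx C G.
  by rewrite /intmx map_trmx -!map_mxM gGg.
by rewrite /bilC trmx_mul !mulmxA -!(mulmxA x^T) gGg_C.
Qed.

Lemma conjv_intmx (g : 'M[int]_n) (z : 'cV[C]_n) :
  conjv (intmx C g *m z) = intmx C g *m conjv z.
Proof.
rewrite /conjv map_mxM; congr (_ *m _).
by apply/matrixP => i j; rewrite !mxE rmorph_int.
Qed.

Lemma Omega_orthO (G g : 'M[int]_n) (z : 'cV[C]_n) :
  orthO G g -> Omega G z -> Omega G (intmx C g *m z).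
Proof.
move=> og [z_neq0 [zz zzbar]].
have g_unit : intmx C g \in unitmx.
  by rewrite unitmxE det_map_mx rmorph_unit // -unitmxE; case: og.
split; [|split].
- apply: contraNneq z_neq0 => gz0.
  by rewrite -(mulKmx g_unit z) gz0 mulmx0.
- by rewrite bilC_orthO.
- by rewrite conjv_intmx bilC_orthO.
Qed.

End ComplexCone.

Lemma conn_component_invol (R : realType) (n : nat) (X D : 'cV[R[i]]_n -> Prop)
    (f : 'cV[R[i]]_n -> 'cV[R[i]]_n) :
  conn_component X D -> (forall z, X z -> X (f z)) -> involutive f ->
  (forall A, openC A -> openC (fun z => A (f z))) ->
  (exists z, D z /\ D (f z)) -> forall w, D w <-> D (f w).
Proof.
move=> [DX _ D_conn D_max] Xf ff f_cont [z0 [Dz0 Dfz0]].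
have Df_conn : connectedC (fun z => D (f z)).
  move=> A B oA oB cover disj.
  have cover_f : forall z, D z -> A (f z) \/ B (f z).
    by move=> z Dz; apply: cover; rewrite ff.
  have disj_f : forall z, D z -> A (f z) -> B (f z) -> False.
    by move=> z Dz; apply: disj; rewrite ff.
  have [HA|HB] := D_conn _ _ (f_cont _ oA) (f_cont _ oB) cover_f disj_f.
  + by left => z Dfz; rewrite -[z]ff; apply: HA.
  + by right => z Dfz; rewrite -[z]ff; apply: HB.
have Df_sub : forall w, D (f w) -> D w.
  apply: D_max Df_conn _; last by exists z0.
  by move=> z /DX /Xf; rewrite ff.
by move=> w; split=> [Dw|]; [apply: Df_sub; rewrite ff | exact: Df_sub].
Qed.

Lemma intmx_reflmx_fix (R : realType) (n : nat) (G : 'M[int]_n) (d : 'cV[int]_n)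
    (w : 'cV[R[i]]_n) :
  bilC G (intmx R[i] d) w = 0 -> intmx R[i] (reflmx G d) *m w = w.
Proof.
move=> dw; rewrite intmx_reflmx reflmx_fix // [LHS]mx11_scalar [_ 0 0]dw.
by apply/matrixP => i j; rewrite !mxE mul0rn.
Qed.

Lemma reflmx_Otilde_plus (R : realType) (n : nat) (G : 'M[int]_n) (d : 'cV[int]_n)
    (D : 'cV[R[i]]_n -> Prop) (w : 'cV[R[i]]_n) :
  G^T = G -> (d^T *m G *m d) 0 0 = -2 -> conn_component (Omega G) D ->
  D w -> intmx R[i] (reflmx G d) *m w = w -> Otilde_plus G D (reflmx G d).
Proof.
move=> G_sym dGd D_comp Dw sw.
have s_invol := reflmx_invol dGd.
have s_orthO : orthO G (reflmx G d).
  by split; [case: (mulmx1_unit s_invol) | exact: reflmx_orth].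
split; last exact: reflmx_acts_trivially_on_discr.
split=> //; apply: (@conn_component_invol _ _ _ _ _ D_comp).
- by move=> z; apply: Omega_orthO.
- by move=> z; rewrite mulmxA -intmxM s_invol intmx1 mul1mx.
- exact: openC_preimage_mulmx.
- by exists w; rewrite sw.
Qed.

Lemma modular_form_fixpoint_eq0 (R : realType) (n : nat) (D : 'cV[R[i]]_n -> Prop)
    (Gamma : 'M[int]_n -> Prop) (chi : 'M[int]_n -> R[i]) (k : int)
    (F : 'cV[R[i]]_n -> R[i]) (g : 'M[int]_n) (w : 'cV[R[i]]_n) :
  modular_form D Gamma chi k F -> Gamma g -> chi g = -1 ->
  D w -> intmx R[i] g *m w = w -> F w = 0.
Proof.
case=> _ _ F_mod Gg chi_g Dw gw.
move: (F_mod g w Gg Dw); rewrite gw chi_g mulN1r => /eqP.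
by rewrite eq_sym eqNr => /eqP.
Qed.

Theorem corollary3p3 (R : realType) (b : nat) (G : 'M[int]_(2 + b)) :
  (3 <= b)%N -> G^T = G -> has_signature R 2 b G ->
  forall D : 'cV[R[i]]_(2 + b) -> Prop, conn_component (Omega G) D ->
  forall (k : int) (F : 'cV[R[i]]_(2 + b) -> R[i]),
    modular_form1 G D (Otilde_plus G D) (@detchar R _) k F <->
    modular_form D (Otilde_plus G D) (@detchar R _) k F.
Proof.
move=> _ G_sym _ D D_comp k F; split=> [[]//|mf]; split=> // d dGd w Dw dw.
have sw := intmx_reflmx_fix dw.
apply: (modular_form_fixpoint_eq0 mf _ _ Dw sw).
- exact: reflmx_Otilde_plus sw.
- by rewrite /detchar reflmx_det.
Qed.
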